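(* Let $b\ge1$, $k\ge 0$. For $S\in\mathrm{SYT}^{+k}((b,b))$ define the path $\beta(S)$ of length $2b+k$ whose $j$-th step ($j\in[2b+k]$) is: an up step $U$ if $j$ is the minimum of the set in some top-row cell; a down step $D$ if $j$ is the minimum of the set in some bottom-row cell; an umber horizontal step if $j$ is a non-minimal element of a top-row cell; a denim horizontal step if $j$ is a non-minimal element of a bottom-row cell. Then $\beta$ is a bijection from $\mathrm{SYT}^{+k}((b,b))$ onto the set of paths in $\mathrm{Motz}^{\{1,2\}}(2b+k)$ having exactly $k$ horizontal steps.
   Context: $\mathrm{SYT}^{+k}(\lambda)$: for a partition $\lambda$ of $N$ and $k\ge 0$, the set of fillings of the cells of $\lambda$ by nonempty sets of positive integers forming a set partition of $[N+k]$, with $\max S(u)<\min S(v)$ whenever $u\ne v$ and $u$ is weakly northwest of $v$. A bicolored Motzkin path of length $n$ is a lattice path from $(0,0)$ to $(n,0)$ with steps $U=(1,1)$, $D=(1,-1)$ and horizontal steps $(1,0)$, each horizontal step colored either umber ($u$) or denim ($d$), never going below the $x$-axis. $\mathrm{Motz}^{\{1,2\}}(n)$ is the set of such paths satisfying both: (1) no umber step occurs at height $0$; (2) no denim step occurs before the first down step. *)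

From mathcomp Require Import all_boot all_order all_algebra.
Set Implicit Arguments. Unset Strict Implicit. Unset Printing Implicit Defensive.
Import GRing.Theory Num.Theory.

(* Conventions: the positive integer i+1 in [N+k] is represented by the
   ordinal i : 'I_(N+k).  A cell of the shape (b,b) is a pair
   (r, c) : 'I_2 * 'I_b, r = 0 the top row, r = 1 the bottom row. *)

Definition cell (b : nat) := ('I_2 * 'I_b)%type.

Definition weakNW (b : nat) (u v : cell b) : bool :=
  (u.1 <= v.1)%N && (u.2 <= v.2)%N.

Definition is_SYTk (b k : nat) (S : {ffun cell b -> {set 'I_(2 * b + k)}}) : Prop :=
  (forall u, S u != set0) /\
  (forall u v, u != v -> [disjoint S u & S v]) /\
  (forall j : 'I_(2 * b + k), exists u, j \in S u) /\
  (forall u v, u != v -> weakNW u v ->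
     forall x y, x \in S u -> y \in S v -> (x < y)%N).

Inductive step := U | D | Hu | Hd.

Definition isD (s : step) : bool := if s is D then true else false.
Definition isHu (s : step) : bool := if s is Hu then true else false.
Definition isHd (s : step) : bool := if s is Hd then true else false.
Definition isH (s : step) : bool := isHu s || isHd s.

Definition delta (s : step) : int :=
  match s with U => 1%R | D => (-1)%R | _ => 0%R end.

Definition height (p : seq step) : int := (\sum_(s <- p) delta s)%R.

Definition is_motzkin (n : nat) (p : seq step) : Prop :=
  size p = n /\
  (forall i, (i <= size p)%N -> (0 <= height (take i p))%R) /\
  height p = 0%R.

Definition is_motz12 (n : nat) (p : seq step) : Prop :=
  is_motzkin n p /\
  (forall i, (i < size p)%N -> isHu (nth U p i) -> height (take i p) != 0%R) /\
  (forall i, (i < size p)%N -> isHd (nth U p i) -> has isD (take i p)).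

Definition is_min_of n (A : {set 'I_n}) (j : 'I_n) : bool :=
  (j \in A) && [forall i in A, (j <= i)%N].

Definition beta_step (b k : nat) (S : {ffun cell b -> {set 'I_(2 * b + k)}})
  (j : 'I_(2 * b + k)) : step :=
  match [pick u | j \in S u] with
  | Some u =>
      if u.1 == 0 :> nat then (if is_min_of (S u) j then U else Hu)
      else (if is_min_of (S u) j then D else Hd)
  | None => U
  end.

Definition beta (b k : nat) (S : {ffun cell b -> {set 'I_(2 * b + k)}}) : seq step :=
  [seq beta_step S j | j <- enum 'I_(2 * b + k)].

From mathcomp Require Import all_boot all_order all_algebra.
From mathcomp Require Import zify.
Set Implicit Arguments. Unset Strict Implicit. Unset Printing Implicit Defensive.
Import GRing.Theory Num.Theory.

(* Reading the entries 1, 2, ... of S in order, the step of an entry records its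
   row and whether it opens its cell.  Cells of a row are opened from left to
   right, so the column of an entry is the number of cells of its row opened so
   far: S is recovered from beta S, which gives injectivity and, read on an
   arbitrary path, the inverse map.  The height after i steps is the number of
   open top cells minus the number of open bottom cells; it is nonnegative
   because a bottom cell opens after the top cell above it.  An umber step lies
   in an open top cell whose bottom neighbour is still closed, so the height is
   positive there, and a denim step lies in a bottom cell opened earlier by a
   down step. *)

Definition isU (s : step) : bool := if s is U then true else false.

Definition opens (r : nat) : pred step := if r == 0 then isU else isD.

Definition step_row (s : step) : nat := match s with U | Hu => 0 | _ => 1 end.

Definition prefix_count (P : pred step) (p : seq step) (i : nat) : nat :=
  count P (take i p).

Lemma ord2_cases (r : 'I_2) : r = ord0 \/ r = ord_max.
Proof. by case: r => -[|[|//]] h; [left|right]; apply: val_inj. Qed.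

Lemma card_ord_le (b c : nat) : c < b -> #|[set x : 'I_b | x <= c]| = c.+1.
Proof.
move=> cb; have -> : [set x : 'I_b | x <= c] = widen_ord cb @: setT.
  apply/setP => x; rewrite inE; apply/idP/imsetP => [xc|[y _ ->]]; last first.
    by rewrite /= -ltnS.
  by exists (Ordinal (xc : x < c.+1)) => //; apply: val_inj.
rewrite card_imset ?cardsT ?card_ord //.
by move=> x y /(congr1 val) /= /val_inj.
Qed.

Section PrefixCount.
Variables (P : pred step) (p : seq step).

Lemma prefix_count0 : prefix_count P p 0 = 0.
Proof. by rewrite /prefix_count take0. Qed.

Lemma prefix_countS i :
  prefix_count P p i.+1 = prefix_count P p i + ((i < size p) && P (nth U p i)).
Proof.
rewrite /prefix_count; case: (ltnP i (size p)) => ip.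
  by rewrite (take_nth U ip) -cats1 count_cat /= addn0.
by rewrite !take_oversize ?addn0 // ltnW.
Qed.

Lemma prefix_count_size : prefix_count P p (size p) = count P p.
Proof. by rewrite /prefix_count take_size. Qed.

Lemma prefix_count_mono : {homo prefix_count P p : i j / i <= j}.
Proof.
move=> i j ij; rewrite -(subnKC ij); elim: (j - i) => [|d IH]; first by rewrite addn0.
by rewrite addnS prefix_countS (leq_trans IH) ?leq_addr.
Qed.

Lemma prefix_count_witness i v : v < prefix_count P p i ->
  exists j, [/\ j < i, j < size p, P (nth U p j) & prefix_count P p j = v].
Proof.
elim: i => [|i IH]; first by rewrite prefix_count0.
rewrite prefix_countS; case: (ltnP v (prefix_count P p i)) => [/IH|vi].
  by case=> j [ji *]; exists j; split; rewrite // ltnW.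
case: (boolP (_ && _)) => [/andP[ip Pi] vS|_]; last by rewrite addn0 ltnNge vi.
by exists i; split=> //; lia.
Qed.

End PrefixCount.

Lemma height_count s : height s = (Posz (count isU s) - Posz (count isD s))%R.
Proof.
elim: s => [|x s IH]; first by rewrite /height big_nil.
by rewrite /height big_cons -/(height s) IH; case: x => /=; rewrite ?add0n; lia.
Qed.

Lemma count_step_kinds s : count isU s + count isD s + count isH s = size s.
Proof. by elim: s => [|x s IH] //=; case: x => /=; lia. Qed.

Lemma opens_row (r : 'I_2) s : opens r s -> step_row s = r.
Proof. by case: (ord2_cases r) => ->; case: s. Qed.

Definition tableau_of_path (b k : nat) (p : seq step) : {ffun cell b -> {set 'I_(2 * b + k)}} :=
  [ffun u : cell b => [set j : 'I_(2 * b + k) |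
     (step_row (nth U p j) == u.1) && (prefix_count (opens u.1) p j.+1 == u.2.+1)]].

Lemma mem_tableau_of_path b k p (j : 'I_(2 * b + k)) (u : cell b) :
  (j \in tableau_of_path b k p u) =
  (step_row (nth U p j) == u.1) && (prefix_count (opens u.1) p j.+1 == u.2.+1).
Proof. by rewrite ffunE inE. Qed.

Section TableauToPath.
Variables (b k : nat) (S : {ffun cell b -> {set 'I_(2 * b + k)}}).
Local Notation n := (2 * b + k).

Lemma size_beta : size (beta S) = n.
Proof. by rewrite size_map size_enum_ord. Qed.

Lemma nth_beta (j : 'I_n) : nth U (beta S) j = beta_step S j.
Proof. by rewrite (nth_map j) ?nth_ord_enum // size_enum_ord. Qed.

Definition opened (r : 'I_2) (i : nat) : {set 'I_b} :=
  [set c | [exists j : 'I_n, (j < i) && (j \in S (r, c))]].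

Lemma opened0 r : opened r 0 = set0.
Proof. by apply/setP => c; rewrite !inE; apply/existsP; case. Qed.

Lemma is_min_ofE r c (j : 'I_n) : j \in S (r, c) ->
  is_min_of (S (r, c)) j = (c \notin opened r j).
Proof.
move=> hj; rewrite /is_min_of hj inE negb_exists; apply: eq_forallb => x.
by rewrite negb_and -leqNgt orbC implybE.
Qed.

Hypothesis HS : is_SYTk S.

Lemma tableau_cell_uniq j u v : j \in S u -> j \in S v -> u = v.
Proof.
move=> ju jv; apply/eqP/negPn/negP => /(proj1 (proj2 HS)) /disjointFr.
by move/(_ _ ju); rewrite jv.
Qed.

Lemma tableau_lt u v x y : u != v -> weakNW u v -> x \in S u -> y \in S v -> x < y.
Proof.
by move=> uv nw xu yv; case: HS => _ [_ [_ ordered]]; exact: ordered uv nw x y xu yv.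
Qed.

Lemma tableau_cell_nonempty u : exists x, x \in S u.
Proof. by apply/set0Pn; case: HS. Qed.

Lemma tableau_cover (j : 'I_n) : exists u, j \in S u.
Proof. by case: HS => _ [_ []]. Qed.

Lemma beta_stepE j u : j \in S u -> beta_step S j =
  if u.1 == 0 :> nat then (if is_min_of (S u) j then U else Hu)
  else (if is_min_of (S u) j then D else Hd).
Proof.
move=> ju; rewrite /beta_step; case: pickP => [v jv|/(_ u)]; last by rewrite ju.
by rewrite (tableau_cell_uniq jv ju).
Qed.

Lemma step_row_beta (j : 'I_n) r c : j \in S (r, c) -> step_row (nth U (beta S) j) = r.
Proof.
move=> jrc; rewrite nth_beta (beta_stepE jrc) /=.
by case: (ord2_cases r) => ->; case: (is_min_of _ _).
Qed.

Lemma opens_beta_step (r : 'I_2) (j : 'I_n) u : j \in S u ->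
  opens r (beta_step S j) = (u.1 == r) && (u.2 \notin opened r j).
Proof.
case: u => r' c ju; rewrite (beta_stepE ju) (is_min_ofE ju) /=.
by case: (ord2_cases r) => ->; case: (ord2_cases r') => ->; case: (c \in _).
Qed.

Lemma opened_succ (r : 'I_2) (j : 'I_n) u : j \in S u ->
  opened r j.+1 = if u.1 == r then u.2 |: opened r j else opened r j.
Proof.
move=> ju; have mem c : (c \in opened r j.+1) = (c \in opened r j) || ((r, c) == u).
  rewrite !inE; apply/existsP/orP.
    case=> x /andP[]; rewrite ltnS leq_eqVlt => /orP[/eqP/val_inj -> jrc|xj xrc].
      by right; apply/eqP/(tableau_cell_uniq jrc ju).
    by left; apply/existsP; exists x; rewrite xj.
  case=> [/existsP[x /andP[xj xrc]]|/eqP ->]; first by exists x; rewrite xrc ltnW.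
  by exists j; rewrite ltnSn.
apply/setP => c; rewrite mem; case: u ju {mem} => r' c' _; rewrite xpair_eqE.
by case: (eqVneq r' r) => _; rewrite ?andTb ?andFb ?in_setU1 ?orbF // orbC.
Qed.

Lemma prefix_count_beta (r : 'I_2) i : i <= n -> prefix_count (opens r) (beta S) i = #|opened r i|.
Proof.
elim: i => [|i IH] hi; first by rewrite prefix_count0 opened0 cards0.
case: (tableau_cover (Ordinal hi)) => u hu.
rewrite prefix_countS (IH (ltnW hi)) size_beta hi andTb.
rewrite -[i]/(nat_of_ord (Ordinal hi)) nth_beta (opens_beta_step r hu) (opened_succ r hu).
by case: (u.1 == r); rewrite ?cardsU1 1?addnC ?addn0.
Qed.

Lemma opened_at_cell (r : 'I_2) (j : 'I_n) c : j \in S (r, c) ->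
  opened r j.+1 = [set c' : 'I_b | c' <= c].
Proof.
have row_lt (x y : 'I_n) (c1 c2 : 'I_b) : c1 < c2 -> x \in S (r, c1) -> y \in S (r, c2) -> x < y.
  move=> c12 hx hy; apply: (tableau_lt _ _ hx hy); last by rewrite /weakNW /= leqnn ltnW.
  by rewrite xpair_eqE eqxx /=; apply: contraTneq c12 => ->; rewrite ltnn.
move=> jrc; apply/setP => c'; rewrite !inE; apply/existsP/idP.
  case=> x /andP[xj xrc]; rewrite leqNgt; apply: contraTN xj => cc'.
  by rewrite -leqNgt (row_lt _ _ _ _ cc' jrc xrc).
rewrite leq_eqVlt => /orP[/eqP/val_inj ->|c'c]; first by exists j; rewrite ltnSn.
case: (tableau_cell_nonempty (r, c')) => x xrc'; exists x.
by rewrite xrc' andbT ltnS ltnW // (row_lt _ _ _ _ c'c xrc' jrc).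
Qed.

Lemma prefix_count_beta_cell (r : 'I_2) (j : 'I_n) c : j \in S (r, c) ->
  prefix_count (opens r) (beta S) j.+1 = c.+1.
Proof. by move=> jrc; rewrite prefix_count_beta // (opened_at_cell jrc) card_ord_le. Qed.

Lemma tableau_of_beta : tableau_of_path b k (beta S) = S.
Proof.
apply/ffunP => -[r c]; apply/setP => j; rewrite mem_tableau_of_path /=.
apply/idP/idP => [|jrc]; last first.
  by rewrite (step_row_beta jrc) (prefix_count_beta_cell jrc) !eqxx.
case: (tableau_cover j) => -[r' c'] jrc'.
rewrite (step_row_beta jrc') => /andP[/eqP/val_inj er]; subst r'.
by rewrite (prefix_count_beta_cell jrc') eqSS => /eqP/val_inj ec; subst c'.
Qed.

Lemma opened_bottom_sub_top i : opened ord_max i \subset opened ord0 i.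
Proof.
apply/subsetP => c; rewrite !inE => /existsP[x /andP[xi x1c]].
case: (tableau_cell_nonempty (ord0, c)) => y y0c; apply/existsP; exists y.
by rewrite y0c andbT (ltn_trans _ xi) // (tableau_lt _ _ y0c x1c) // /weakNW /= leqnn.
Qed.

Lemma opened_all r : opened r n = setT.
Proof.
apply/setP => c; rewrite !inE; case: (tableau_cell_nonempty (r, c)) => x xrc.
by apply/existsP; exists x; rewrite xrc ltn_ord.
Qed.

Lemma count_opens_beta (r : 'I_2) : count (opens r) (beta S) = b.
Proof.
by rewrite -prefix_count_size size_beta prefix_count_beta // opened_all cardsT card_ord.
Qed.

Lemma height_beta i : i <= n ->
  height (take i (beta S)) = (Posz #|opened ord0 i| - Posz #|opened ord_max i|)%R.
Proof. by move=> hi; rewrite height_count -!prefix_count_beta. Qed.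

Lemma beta_motzkin : is_motzkin n (beta S).
Proof.
split; first exact: size_beta.
split=> [i|].
  rewrite size_beta => hi.
  by rewrite (height_beta hi) subr_ge0 lez_nat subset_leq_card ?opened_bottom_sub_top.
by rewrite -(take_size (beta S)) size_beta (height_beta (leqnn n)) !opened_all subrr.
Qed.

Lemma beta_umber_height (j : 'I_n) :
  isHu (nth U (beta S) j) -> height (take j (beta S)) != 0.
Proof.
case: (tableau_cover j) => -[r c] jrc; rewrite nth_beta (beta_stepE jrc) (is_min_ofE jrc) /=.
case: (ord2_cases r) jrc => -> jrc /=; last by case: (_ \in _).
case: ifP => // /negbFE c_open _.
rewrite height_beta 1?ltnW // subr_eq0 eqz_nat; apply: contraTN c_open => /eqP eq_card.
have : opened ord_max j == opened ord0 j by rewrite eqEcard opened_bottom_sub_top eq_card /=.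
move/eqP <-; rewrite inE negb_exists; apply/forallP => y; apply/negP => /andP[yj y1c].
suff : j < y by rewrite ltnNge ltnW.
by apply: (tableau_lt _ _ jrc y1c); rewrite // /weakNW /= leqnn.
Qed.

Lemma beta_denim_after_down (j : 'I_n) :
  isHd (nth U (beta S) j) -> has isD (take j (beta S)).
Proof.
case: (tableau_cover j) => -[r c] jrc; rewrite nth_beta (beta_stepE jrc) (is_min_ofE jrc) /=.
case: (ord2_cases r) jrc => -> jrc /=; first by case: (_ \in _).
case: ifP => // /negbFE c_open _; rewrite has_count.
change (0 < prefix_count (opens (@ord_max 1)) (beta S) j).
by rewrite (prefix_count_beta _ (ltnW (ltn_ord j))) card_gt0; apply/set0Pn; exists c.
Qed.

Lemma beta_motz12 : is_motz12 n (beta S).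
Proof.
split; first exact: beta_motzkin.
by split=> i; rewrite size_beta => hi; rewrite -[i]/(nat_of_ord (Ordinal hi));
  [apply: beta_umber_height | apply: beta_denim_after_down].
Qed.

Lemma count_isH_beta : count isH (beta S) = k.
Proof.
have := count_step_kinds (beta S).
by rewrite (count_opens_beta ord0) (count_opens_beta ord_max) size_beta; lia.
Qed.

End TableauToPath.

Section PathToTableau.
Variables (b k : nat) (p : seq step).
Local Notation n := (2 * b + k).
Hypotheses (Hp : is_motz12 n p) (Hk : count isH p = k).

Lemma size_motz12 : size p = n.
Proof. by case: Hp => -[]. Qed.

Lemma prefix_countD_le i : i <= n -> prefix_count isD p i <= prefix_count isU p i.
Proof.
move=> hi; case: Hp => -[_ [/(_ i)]]; rewrite size_motz12 => /(_ hi) + _ _.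
by rewrite height_count subr_ge0 lez_nat.
Qed.

Lemma prefix_countD_lt_umber i : i < n -> isHu (nth U p i) ->
  prefix_count isD p i < prefix_count isU p i.
Proof.
move=> hi hu; case: Hp => _ [/(_ i)]; rewrite size_motz12 => /(_ hi hu) + _.
rewrite height_count subr_eq0 eqz_nat ltn_neqAle eq_sym => ->.
exact: prefix_countD_le (ltnW hi).
Qed.

Lemma prefix_countD_pos_denim i : i < n -> isHd (nth U p i) -> 0 < prefix_count isD p i.
Proof.
move=> hi hd; case: Hp => _ [_ /(_ i)]; rewrite size_motz12 => /(_ hi hd).
by rewrite has_count.
Qed.

Lemma count_opens_motz12 r : count (opens r) p = b.
Proof.
have := count_step_kinds p; rewrite Hk size_motz12.
case: Hp => -[_ [_ /eqP]]; rewrite height_count subr_eq0 eqz_nat => /eqP.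
by rewrite /opens; case: (r == 0); lia.
Qed.

Lemma prefix_count_opens_le r i : prefix_count (opens r) p i <= b.
Proof.
rewrite -(count_opens_motz12 r) -prefix_count_size.
case: (leqP i (size p)) => [|pi]; first exact: prefix_count_mono.
by rewrite /prefix_count !take_oversize // ltnW.
Qed.

Lemma prefix_countD_lt_top x : x < n -> step_row (nth U p x) = 0 ->
  prefix_count isD p x < prefix_count isU p x.+1.
Proof.
move=> xn; rewrite prefix_countS size_motz12 xn /=.
case E: (nth U p x) => //= _; first by rewrite addn1 ltnS prefix_countD_le // ltnW.
by rewrite addn0 prefix_countD_lt_umber ?E.
Qed.

Lemma prefix_count_opens_pos j : j < n ->
  0 < prefix_count (opens (step_row (nth U p j))) p j.+1.
Proof.
move=> jn; rewrite prefix_countS size_motz12 jn andTb.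
case E: (nth U p j) => /=; rewrite ?addn1 // addn0.
  by rewrite (leq_ltn_trans (leq0n _) (prefix_countD_lt_umber jn _)) ?E.
by rewrite prefix_countD_pos_denim ?E.
Qed.

Local Notation T := (tableau_of_path b k p).

Lemma tableau_of_path_cover (j : 'I_n) : exists u, j \in T u.
Proof.
have row_lt : step_row (nth U p j) < 2 by case: (nth U p j).
have pos := prefix_count_opens_pos (ltn_ord j).
set m := prefix_count _ p j.+1 in pos *.
have col_lt : m.-1 < b by have := prefix_count_opens_le (step_row (nth U p j)) j.+1; lia.
by exists (Ordinal row_lt, Ordinal col_lt); rewrite mem_tableau_of_path /= prednK // !eqxx.
Qed.

Lemma mem_tableau_of_path_opening (r : 'I_2) (c : 'I_b) (j : 'I_n) :
  opens r (nth U p j) -> prefix_count (opens r) p j = c -> j \in T (r, c).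
Proof.
move=> opj cj; rewrite mem_tableau_of_path /= (opens_row opj) eqxx andTb.
by rewrite prefix_countS size_motz12 ltn_ord opj cj addn1.
Qed.

Lemma tableau_of_path_nonempty u : exists j, j \in T u.
Proof.
case: u => r c; have : c < prefix_count (opens r) p (size p).
  by rewrite prefix_count_size count_opens_motz12.
case/prefix_count_witness => j [_ jn opj cj]; rewrite size_motz12 in jn.
by exists (Ordinal jn); apply: mem_tableau_of_path_opening.
Qed.

Lemma tableau_of_path_disjoint u v : u != v -> [disjoint T u & T v].
Proof.
rewrite -setI_eq0; apply: contraNT => /set0Pn[j].
case: u v => r c [r' c']; rewrite inE !mem_tableau_of_path /=.
move=> /andP[/andP[/eqP row /eqP col] /andP[/eqP row' /eqP col']].
have er : r = r' by apply: val_inj; rewrite /= -row -row'.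
by move: col; subst r'; rewrite col' => -[/val_inj ->].
Qed.

Lemma tableau_of_path_row_lt r (c c' : 'I_b) x y :
  c < c' -> x \in T (r, c) -> y \in T (r, c') -> x < y.
Proof.
move=> cc'; rewrite !mem_tableau_of_path /= => /andP[_ /eqP cx] /andP[_ /eqP cy].
rewrite ltnNge; apply: contraTN cc' => yx.
by rewrite -leqNgt -ltnS -cx -cy prefix_count_mono.
Qed.

Lemma tableau_of_path_col_lt (c c' : 'I_b) x y :
  c <= c' -> x \in T (ord0, c) -> y \in T (ord_max, c') -> x < y.
Proof.
move=> cc'; rewrite !mem_tableau_of_path /= => /andP[/eqP rx /eqP cx] /andP[/eqP ry /eqP cy].
rewrite ltnNge; apply/negP => yx.
have yx' : y < x.
  by rewrite ltn_neqAle yx andbT; apply/eqP => exy; move: ry; rewrite exy rx.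
have := prefix_count_mono isD p (yx' : y.+1 <= x); rewrite cy.
by have := prefix_countD_lt_top (ltn_ord x) rx; rewrite cx; lia.
Qed.

Lemma tableau_of_path_lt u v x y :
  u != v -> weakNW u v -> x \in T u -> y \in T v -> x < y.
Proof.
case: u v => r c [r' c'] neq /andP[/= rr' cc'].
have cc'_lt : r = r' -> c < c'.
  move=> err'; rewrite ltn_neqAle cc' andbT.
  by apply: contraNneq neq => /val_inj ->; rewrite err'.
case: (ord2_cases r) rr' cc'_lt => ->; case: (ord2_cases r') => -> // _ cc'_lt.
- by apply: tableau_of_path_row_lt; apply: cc'_lt.
- exact: tableau_of_path_col_lt.
- by apply: tableau_of_path_row_lt; apply: cc'_lt.
Qed.

Lemma tableau_of_path_SYT : is_SYTk T.
Proof.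
split=> [u|]; first by apply/set0Pn/tableau_of_path_nonempty.
split; first exact: tableau_of_path_disjoint.
split; first exact: tableau_of_path_cover.
by move=> u v uv nw x y; apply: tableau_of_path_lt.
Qed.

Lemma opened_tableau_of_path r c (i : 'I_n) : i \in T (r, c) ->
  (c \in opened T r i) = ~~ opens r (nth U p i).
Proof.
rewrite mem_tableau_of_path /= => /andP[_ /eqP]; rewrite prefix_countS size_motz12 ltn_ord andTb.
case: (opens r (nth U p i)) => /=; last first.
  rewrite addn0 => ci; have : c < prefix_count (opens r) p i by rewrite ci.
  case/prefix_count_witness => x [xi xn opx cx]; rewrite size_motz12 in xn.
  rewrite inE; apply/existsP; exists (Ordinal xn); rewrite xi.
  exact: mem_tableau_of_path_opening.
rewrite addn1 => -[ci]; rewrite inE; apply/existsP => -[x /andP[xi]].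
rewrite mem_tableau_of_path /= => /andP[_ /eqP cx].
by have := prefix_count_mono (opens r) p (xi : x.+1 <= i); rewrite ci cx ltnn.
Qed.

Lemma beta_tableau_of_path : beta T = p.
Proof.
apply: (@eq_from_nth _ U); first by rewrite size_beta size_motz12.
move=> i; rewrite size_beta => hi; rewrite -[i]/(nat_of_ord (Ordinal hi)) nth_beta.
case: (tableau_of_path_cover (Ordinal hi)) => -[r c] hrc.
rewrite (beta_stepE tableau_of_path_SYT hrc) (is_min_ofE hrc) (opened_tableau_of_path hrc) negbK.
move: hrc; rewrite mem_tableau_of_path /= => /andP[/eqP + _].
by case: (ord2_cases r) => ->; case: (nth U p _).
Qed.

End PathToTableau.

Theorem theorem11 (b k : nat) (hb : (1 <= b)%N) :
  (forall S : {ffun cell b -> {set 'I_(2 * b + k)}}, is_SYTk S ->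
     is_motz12 (2 * b + k) (beta S) /\ count isH (beta S) = k) /\
  (forall S1 S2 : {ffun cell b -> {set 'I_(2 * b + k)}},
     is_SYTk S1 -> is_SYTk S2 -> beta S1 = beta S2 -> S1 = S2) /\
  (forall p, is_motz12 (2 * b + k) p -> count isH p = k ->
     exists S : {ffun cell b -> {set 'I_(2 * b + k)}}, is_SYTk S /\ beta S = p).
Proof.
split; first by move=> S HS; split; [exact: beta_motz12 | exact: count_isH_beta].
split; first by move=> S1 S2 H1 H2 e; rewrite -(tableau_of_beta H1) e tableau_of_beta.
move=> p Hp Hk; exists (tableau_of_path b k p).
by split; [exact: tableau_of_path_SYT | exact: beta_tableau_of_path].
Qed.
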